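(* Let $q=p^m$ be a prime power with $p$ prime, let $3\le h\le k$ be integers, and $$D_3=\Bigl\{(x_1,\ldots,x_k)\in\mathbb{F}_q^k\setminus\{0\}:\prod_{i=1}^h x_i\prod_{1\le i<j\le h}(x_i+x_j)=0\Bigr\}.$$ Let $$\Gamma(h,q)=\sum_{s=1}^{\min(h,(q-1)/2)}\frac{(q-1)(q-3)\cdots(q-2s+1)}{s!}\,\mathcal{S}(h,s),$$ where $\mathcal{S}(x,y)$ is the number of surjective functions from a set of size $x$ onto a set of size $y\le x$. Then the length $\#D_3$ of the code $\mathrm{C}_{D_3}$ equals $q^{k-h}\bigl(q^h-(q-1)(q-2)\cdots(q-h)\bigr)-1$ if $p=2$ and $h\le q+1$; $q^k-1$ if $p=2$ and $h>q+1$; and $q^{k-h}\bigl(q^h-\Gamma(h,q)\bigr)-1$ if $p>2$.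
   Context: For a finite set $D=\{P_1,\ldots,P_n\}\subseteq\mathbb{F}_q^k$, $\mathrm{C}_D=\{(f(P_1),\ldots,f(P_n)):f:\mathbb{F}_q^k\to\mathbb{F}_q\text{ linear}\}$, a code of length $n=\#D$. *)

From HB Require Import structures.
From mathcomp Require Import all_boot all_order all_algebra all_field.
Set Implicit Arguments. Unset Strict Implicit. Unset Printing Implicit Defensive.
Import Order.TTheory GRing.Theory Num.Theory.
Local Open Scope ring_scope.

(* The defining set D_3 of the code C_{D_3}: nonzero vectors x in F^k with
   prod_{i<=h} x_i * prod_{1<=i<j<=h} (x_i + x_j) = 0.  Coordinates are
   indexed from 0, so "first h coordinates" = indices i with i < h. *)
Definition D3 (F : finFieldType) (k h : nat) : {set 'rV[F]_k} :=
  [set x : 'rV[F]_k | (x != 0) &&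
     ((\prod_(i < k | (i < h)%N) x 0 i) *
      (\prod_(i < k) \prod_(j < k | (i < j)%N && (j < h)%N) (x 0 i + x 0 j))
      == 0)].

Definition nsurj (x y : nat) : nat :=
  #|[set f : {ffun 'I_x -> 'I_y} | [forall b, exists a, f a == b]]|.

Definition Gamma (h q : nat) : rat :=
  \sum_(1 <= s < (minn h ((q - 1) %/ 2)).+1)
     ((\prod_(i < s) ((q%:Q) - (2 * i + 1)%:R)) / (s`!)%:R) * (nsurj h s)%:R.

From HB Require Import structures.
From mathcomp Require Import all_boot all_order all_algebra all_field zify ring.
Set Implicit Arguments. Unset Strict Implicit. Unset Printing Implicit Defensive.
Import Order.TTheory GRing.Theory Num.Theory.
Local Open Scope ring_scope.

(* Outside D_3 u {0} lie exactly the vectors whose first h coordinates are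
   nonzero and pairwise non-opposite, so #D_3 = q^k - 1 - N q^(k-h), where N
   counts such h-tuples.  In characteristic 2, opposite means equal and N is the
   number (q-1)(q-2)...(q-h) of injections into F^*.  In odd characteristic,
   F^* splits into n = (q-1)/2 pairs {x, -x}; grouping the tuples by their
   image, N = sum_s 2^s C(n, s) S(h, s): choose s pairs, one element in each,
   and a surjection onto them.  Finally (q-1)(q-3)...(q-2s+1)/s! = 2^s C(n, s),
   so N = Gamma(h, q). *)

Lemma big_ord_lshift_cond (R : Type) (idx : R) (op : Monoid.law idx) h l
    (P : pred nat) (g : 'I_(h + l) -> R) :
  \big[op/idx]_(i < h + l | P i && (i < h)%N) g i
    = \big[op/idx]_(i < h | P i) g (lshift l i).
Proof.
rewrite big_split_ord /= [X in op _ X]big_pred0 => [|j]; last first.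
  by rewrite /= ltnNge leq_addr andbF.
by rewrite Monoid.mulm1; apply: eq_bigl => i; rewrite ltn_ord andbT.
Qed.

Lemma natr_ffact (R : pzRingType) n m :
  (n ^_ m)%:R = \prod_(i < m) (n%:R - i%:R) :> R.
Proof.
elim: m => [|m IHm]; first by rewrite ffactn0 big_ord0.
rewrite ffactnSr natrM big_ord_recr /= -IHm.
have [le_mn | lt_nm] := leqP m n; first by rewrite natrB.
by rewrite (ffact_small lt_nm) !mul0r.
Qed.

Lemma natr_pred_ffact (R : pzRingType) n m : (0 < n)%N ->
  (n.-1 ^_ m)%:R = \prod_(i < m) (n%:R - i.+1%:R) :> R.
Proof.
move=> n_gt0; rewrite natr_ffact; apply: eq_bigr => i _.
by rewrite -[n in RHS](prednK n_gt0) -!natr1 opprD addrACA subrr addr0.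
Qed.

Lemma card_subset_pairs (T : finType) (P : {set T}) s :
  #|[set BS : {set T} * {set T} |
       [&& BS.1 \subset P, BS.2 \subset BS.1 & #|BS.1| == s]]|
    = (2 ^ s * 'C(#|P|, s))%N.
Proof.
set draws := [set B : {set T} | B \subset P & #|B| == s].
rewrite -cards_draws -/draws mulnC -sum_nat_const -sum1_card.
rewrite (eq_bigl (fun BS : {set T} * {set T} =>
                    (BS.1 \in draws) && (BS.2 \subset BS.1))); last first.
  by move=> [B S]; rewrite !inE /= andbAC andbA.
rewrite -(pair_big_dep (mem draws) (fun B S : {set T} => S \subset B)
                       (fun _ _ => 1%N)).
apply: eq_bigr => B; rewrite !inE => /andP[_ /eqP <-].
by rewrite -card_powerset -sum1_card; apply: eq_bigl => S; rewrite powersetE.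
Qed.

Lemma sum_by_card (T : finType) (P : pred {set T}) (w : nat -> nat) :
  (\sum_(A | P A) w #|A| = \sum_(s < #|T|.+1) #|[set A | P A & #|A| == s]| * w s)%N.
Proof.
rewrite (partition_big (fun A : {set T} => inord #|A| : 'I_#|T|.+1) xpredT) //=.
apply: eq_bigr => s _; rewrite -sum_nat_const.
apply: eq_big => A; rewrite ?inE.
  by congr andb; rewrite -(inj_eq val_inj) /= inordK // ltnS max_card.
by case/andP=> _ /eqP <-; rewrite inordK // ltnS max_card.
Qed.

Lemma nsurj0 n : (0 < n)%N -> nsurj n 0 = 0%N.
Proof.
move=> n_gt0; apply: eq_card0 => f; rewrite inE.
by case: (f (Ordinal n_gt0)).
Qed.

Lemma nsurj_small n s : (n < s)%N -> nsurj n s = 0%N.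
Proof.
move=> lt_ns; apply: eq_card0 => f; rewrite inE.
apply: contraTF lt_ns => /forallP f_onto.
rewrite -leqNgt -[s]card_ord -[n in (_ <= n)%N]card_ord.
apply: leq_trans (leq_image_card f predT); apply/subset_leq_card/subsetP => b _.
by case/existsP: (f_onto b) => a /eqP <-; apply: image_f.
Qed.

Lemma card_ffuns_onto (T : finType) n (A : {set T}) :
  #|[set f : {ffun 'I_n -> T} | [set f i | i : 'I_n] == A]| = nsurj n #|A|.
Proof.
pose lift (g : {ffun 'I_n -> 'I_#|A|}) := [ffun i => enum_val (g i)].
have lift_inj : injective lift.
  move=> g g' /ffunP eq_gg'; apply/ffunP => i.
  by move: (eq_gg' i); rewrite !ffunE => /enum_val_inj.
rewrite /nsurj -(card_imset _ lift_inj); apply: eq_card => f; rewrite !inE.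
apply/eqP/imsetP => [im_f | [g /[!inE] /forallP g_onto ->]]; last first.
  apply/setP => y; apply/imsetP/idP => [[i _ ->] | yA].
    by rewrite ffunE enum_valP.
  have [i /eqP gi] := existsP (g_onto (enum_rank_in yA y)).
  by exists i; rewrite // ffunE gi enum_rankK_in.
have fA i : f i \in A by rewrite -im_f imset_f.
exists [ffun i => enum_rank_in (fA i) (f i)].
  rewrite inE; apply/forallP => b.
  have : enum_val b \in [set f i | i : 'I_n] by rewrite im_f enum_valP.
  case/imsetP => i _ fi; apply/existsP; exists i.
  by rewrite ffunE; apply/eqP/enum_val_inj; rewrite enum_rankK_in ?fA.
by apply/ffunP => i; rewrite !ffunE enum_rankK_in.
Qed.

Section OppositeFree.

Variable F : finFieldType.

Definition opp_free n (f : 'I_n -> F) : bool :=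
  [forall i, f i != 0] &&
  [forall i : 'I_n, forall j : 'I_n, (i < j)%N ==> (f i + f j != 0)].

Lemma opp_free_prodE n (f : 'I_n -> F) :
  opp_free f =
  ((\prod_(i < n) f i) * (\prod_(i < n) \prod_(j < n | (i < j)%N) (f i + f j)) != 0).
Proof.
rewrite mulf_eq0 negb_or; congr andb.
  by apply/forallP/prodf_neq0 => [nz i _ | nz i]; apply: nz.
apply/forallP/prodf_neq0 => [nz i _ | nz i].
  by apply/prodf_neq0 => j ij; apply: (implyP (forallP (nz i) j)).
by apply/forallP => j; apply/implyP => ij; move/prodf_neq0: (nz i isT); apply.
Qed.

Lemma D3_prefixE h l (x : 'rV[F]_(h + l)) :
  (x \in D3 F (h + l) h) = (x != 0) && ~~ opp_free [ffun i => x 0 (lshift l i)].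
Proof.
rewrite inE opp_free_prodE negbK; congr (_ && (_ * _ == 0)).
  by rewrite (big_ord_lshift_cond _ xpredT); apply: eq_bigr => i _; rewrite ffunE.
rewrite (bigID (fun i : 'I_(h + l) => (i < h)%N)) /= [X in _ * X]big1 => [|i ih].
  rewrite mulr1 (big_ord_lshift_cond _ xpredT); apply: eq_bigr => i _.
  rewrite (big_ord_lshift_cond _ (fun j => i < j)%N).
  by apply: eq_bigr => j _; rewrite !ffunE.
by rewrite big_pred0 // => j /=; move: ih; rewrite -leqNgt; lia.
Qed.

Lemma card_opp_free_prefix h l :
  #|[set x : 'rV[F]_(h + l) | opp_free [ffun i => x 0 (lshift l i)]]|
    = (#|[set f : {ffun 'I_h -> F} | opp_free f]| * #|F| ^ l)%N.
Proof.
pose split (x : 'rV[F]_(h + l)) := ([ffun i => x 0 (lshift l i)], rsubmx x).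
pose join (fv : {ffun 'I_h -> F} * 'rV[F]_l) := row_mx (\row_i fv.1 i) fv.2.
have splitK : cancel split join.
  move=> x; rewrite -[RHS]hsubmxK; congr row_mx.
  by apply/rowP => i; rewrite !mxE ffunE.
have joinK : cancel join split.
  move=> [f v]; rewrite /split /join row_mxKr; congr pair.
  by apply/ffunP => i; rewrite ffunE row_mxEl mxE.
have -> : [set x : 'rV[F]_(h + l) | opp_free [ffun i => x 0 (lshift l i)]]
    = split @^-1: setX [set f : {ffun 'I_h -> F} | opp_free f] [set: 'rV[F]_l].
  by apply/setP => x; rewrite !inE andbT.
rewrite on_card_preimset; last exact/onW_bij/(Bijective splitK joinK).
by rewrite cardsX cardsT card_mx mul1n.
Qed.

Lemma card_D3 k h : (0 < h)%N -> (h <= k)%N ->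
  (#|D3 F k h| + 1 + #|[set f : {ffun 'I_h -> F} | opp_free f]| * #|F| ^ (k - h))%N
    = (#|F| ^ k)%N.
Proof.
move=> h_gt0 /subnKC <-; set l := (k - h)%N.
rewrite -card_opp_free_prefix addKn.
set G := [set x | _].
have -> : D3 F (h + l) h = ~: (0 |: G).
  by apply/setP => x; rewrite D3_prefixE !inE negb_or.
have G0 : (0 : 'rV[F]_(h + l)) \notin G.
  rewrite inE negb_and; apply/orP; left; apply/forallPn; exists (Ordinal h_gt0).
  by rewrite ffunE mxE eqxx.
have := cardsC (0 |: G); rewrite cardsU1 G0 card_mx mul1n => <-.
by rewrite addnC addnA add1n addnAC addn1.
Qed.

Lemma card_opp_free_pchar2 h : 2 \in [pchar F] ->
  #|[set f : {ffun 'I_h -> F} | opp_free f]| = (#|F|.-1 ^_ h)%N.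
Proof.
move=> charF2; rewrite -(cardC1 0) -[h in RHS]card_ord -card_inj_ffuns_on.
apply: eq_card => f.
rewrite !inE /opp_free; apply/andP/andP.
  case=> /forallP f_nz /forallP f_opp.
  split; first by apply/ffun_onP => i; rewrite inE f_nz.
  apply/injectiveP => i j fij; case: (ltngtP i j) => [lt_ij | lt_ji | /val_inj //].
    by move: (implyP (forallP (f_opp i) j) lt_ij); rewrite fij addrr_pchar2 ?eqxx.
  by move: (implyP (forallP (f_opp j) i) lt_ji); rewrite fij addrr_pchar2 ?eqxx.
case=> f_nz /injectiveP f_inj; split.
  by apply/forallP => i; move/ffun_onP: f_nz => /(_ i); rewrite inE.
apply/forallP => i; apply/forallP => j; apply/implyP => lt_ij.
rewrite addr_eq0 oppr_pchar2 //.
by apply: contraTneq lt_ij => /f_inj ->; rewrite ltnn.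
Qed.

End OppositeFree.

Section OddCharacteristic.

Variable F : finFieldType.
Hypothesis two_neq0 : (2%:R : F) != 0.

Lemma oppr_neq_self (x : F) : x != 0 -> - x != x.
Proof.
move=> x_nz; rewrite eq_sym -subr_eq0 opprK -mulr2n -mulr_natl.
by rewrite mulf_neq0.
Qed.

(* One element from each pair {x, -x} of nonzero elements, selected by
   comparing enumeration ranks. *)
Definition pos : {set F} :=
  [set x | (x != 0) && (enum_rank x < enum_rank (- x))%N].

Lemma pos0 : 0 \notin pos.
Proof. by rewrite inE eqxx. Qed.

Lemma pos_nz x : x \in pos -> x != 0.
Proof. by apply: contraTneq => ->; apply: pos0. Qed.

Lemma opp_in_pos x : x != 0 -> (- x \in pos) = (x \notin pos).
Proof.
move=> x_nz; rewrite !inE oppr_eq0 x_nz opprK /=.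
have rank_neq : enum_rank (- x) != enum_rank x.
  by apply: contra (oppr_neq_self x_nz) => /eqP /enum_rank_inj ->.
by rewrite ltn_neqAle rank_neq leqNgt.
Qed.

Lemma card_pos : #|F| = (#|pos|.*2).+1.
Proof.
rewrite -(cardsC pos).
have -> : ~: pos = 0 |: [set - x | x in pos].
  apply/setP => y; rewrite in_setC in_setU1.
  have [-> | y_nz /=] := eqVneq y 0; first by rewrite pos0.
  apply/idP/imsetP => [y_out | [x x_in ->]].
    by exists (- y); rewrite ?opprK // opp_in_pos.
  by rewrite opp_in_pos ?pos_nz // negbK.
rewrite cardsU1 card_imset; last exact: oppr_inj.
have -> : 0 \notin [set - x | x in pos].
  by apply/imsetP => -[x /pos_nz x_nz /eqP]; rewrite eq_sym oppr_eq0 (negPf x_nz).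
by rewrite add1n addnS addnn.
Qed.

Lemma opp_notin_pos x : x \in pos -> - x \notin pos.
Proof. by move=> x_in; rewrite opp_in_pos ?pos_nz ?negbK. Qed.

Definition pos_abs x := if x \in pos then x else - x.

Lemma pos_abs_in x : x != 0 -> pos_abs x \in pos.
Proof. by rewrite /pos_abs; case: ifPn => // x_out x_nz; rewrite opp_in_pos. Qed.

Lemma pos_abs_opp x : x \in pos -> pos_abs (- x) = x.
Proof. by move=> x_in; rewrite /pos_abs (negPf (opp_notin_pos x_in)) opprK. Qed.

Definition opp_free_set (A : {set F}) := (0 \notin A) && [forall x in A, - x \notin A].

Lemma opp_free_setP (A : {set F}) :
  reflect (0 \notin A /\ {in A, forall x, - x \notin A}) (opp_free_set A).
Proof. apply: (iffP andP) => -[A0 A_opp]; split => //; exact/forall_inP. Qed.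

Lemma opp_free_imset n (f : 'I_n -> F) :
  opp_free f = opp_free_set [set f i | i : 'I_n].
Proof.
apply/andP/opp_free_setP => [[/forallP f_nz /forallP f_opp] | [im0 im_opp]]; split.
- by apply/imsetP => -[i _ /esym/eqP]; apply/negP.
- move=> _ /imsetP[i _ ->]; apply/imsetP => -[j _ /eqP].
  rewrite eq_sym -addr_eq0; case: (ltngtP i j) => [lt_ij | lt_ji | /val_inj ->].
  + by rewrite addrC; apply/negP; apply: (implyP (forallP (f_opp i) j)).
  + by apply/negP; apply: (implyP (forallP (f_opp j) i)).
  + by rewrite addr_eq0 eq_sym (negPf (oppr_neq_self (f_nz j))).
- by apply/forallP => i; apply: contraNneq im0 => <-; apply: imset_f.
- apply/forallP => i; apply/forallP => j; apply/implyP => _.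
  have fj_im : f j \in [set f i | i : 'I_n] by apply: imset_f.
  rewrite addr_eq0; apply/eqP => fi_opp.
  by move: (im_opp _ fj_im); rewrite -fi_opp imset_f.
Qed.

(* The set with absolute values B that is positive exactly on T; every
   opp-free set arises in this way, from a unique pair (B, T). *)
Definition signed_set (B T : {set F}) := T :|: [set - x | x in B :\: T].

Section SignedSet.

Variables B T : {set F}.
Hypotheses (B_pos : B \subset pos) (T_B : T \subset B).

Lemma signed_set_opp_free : opp_free_set (signed_set B T).
Proof.
have T_pos := subset_trans T_B B_pos.
apply/opp_free_setP; split.
  apply/setUP => -[/(subsetP T_pos) | /imsetP[x /setDP[/(subsetP B_pos) x_in _]]].
    by rewrite (negPf pos0).
  by move/eqP; rewrite eq_sym oppr_eq0 (negPf (pos_nz x_in)).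
move=> x /setUP[x_T | /imsetP[z /setDP[z_B z_T] ->]]; apply/setUP => -[].
- apply/negP; rewrite (contraNN (subsetP T_pos _)) //.
  by rewrite opp_notin_pos ?(subsetP T_pos).
- by case/imsetP => y /setDP[_ y_nT] /oppr_inj eq_xy; rewrite -eq_xy x_T in y_nT.
- by rewrite opprK (negPf z_T).
- rewrite opprK => /imsetP[y /setDP[/(subsetP B_pos) y_in _] eq_zy].
  by move: (opp_notin_pos y_in); rewrite -eq_zy (subsetP B_pos).
Qed.

Lemma pos_abs_signed_set : pos_abs @: signed_set B T = B.
Proof.
apply/setP => y; apply/imsetP/idP => [[x] | y_B].
  case/setUP => [x_T | /imsetP[z /setDP[z_B _] ->]] ->.
    by rewrite /pos_abs (subsetP (subset_trans T_B B_pos)) ?(subsetP T_B).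
  by rewrite pos_abs_opp ?(subsetP B_pos).
have [y_T | y_nT] := boolP (y \in T).
  by exists y; rewrite ?inE ?y_T // /pos_abs (subsetP B_pos).
exists (- y); last by rewrite pos_abs_opp ?(subsetP B_pos).
by apply/setUP; right; apply/imsetP; exists y; rewrite // inE y_nT.
Qed.

Lemma signed_setIpos : signed_set B T :&: pos = T.
Proof.
apply/setP => y; rewrite !in_setI in_setU; apply/idP/idP => [/andP[/orP[] // ] | y_T].
  case/imsetP => x /setDP[/(subsetP B_pos) x_in _] ->.
  by rewrite (negPf (opp_notin_pos x_in)).
by rewrite y_T (subsetP (subset_trans T_B B_pos)).
Qed.

End SignedSet.

Section PosAbs.

Variable A : {set F}.
Hypothesis A_opp_free : opp_free_set A.

Lemma pos_abs_sub : pos_abs @: A \subset pos.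
Proof.
case/opp_free_setP: A_opp_free => A0 _.
by apply/subsetP => _ /imsetP[x x_A ->]; apply/pos_abs_in/(contraNneq _ A0) => <-.
Qed.

Lemma card_pos_abs : #|pos_abs @: A| = #|A|.
Proof.
case/opp_free_setP: A_opp_free => _ A_opp; apply: card_in_imset => x y x_A y_A.
rewrite /pos_abs; case: ifP => _; case: ifP => _ // eq_xy.
- by move: (A_opp _ y_A); rewrite -eq_xy x_A.
- by move: (A_opp _ x_A); rewrite eq_xy y_A.
- exact: oppr_inj.
Qed.

Lemma signed_set_pos_abs : signed_set (pos_abs @: A) (A :&: pos) = A.
Proof.
case/opp_free_setP: A_opp_free => A0 A_opp.
apply/setP => y; apply/setUP/idP => [[/setIP[] // | /imsetP[z /setDP[]]] | y_A].
  case/imsetP=> x x_A -> + ->; rewrite /pos_abs; case: ifPn => [x_pos | _].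
    by rewrite inE x_A x_pos.
  by rewrite opprK.
have [y_pos | y_out] := boolP (y \in pos); first by left; apply/setIP.
right; apply/imsetP; exists (- y); rewrite ?opprK //; apply/setDP; split.
  by apply/imsetP; exists y; rewrite // /pos_abs (negPf y_out).
by rewrite inE negb_and (A_opp _ y_A).
Qed.

End PosAbs.

Lemma card_opp_free_sets s :
  #|[set A | opp_free_set A & #|A| == s]| = (2 ^ s * 'C(#|pos|, s))%N.
Proof.
rewrite -card_subset_pairs.
set pairs := [set BT : {set F} * {set F} | _].
have -> : [set A | opp_free_set A & #|A| == s]
    = (fun BT => signed_set BT.1 BT.2) @: pairs.
  apply/setP => A; rewrite inE; apply/andP/imsetP => [[A_free /eqP size_A] | ].
    exists (pos_abs @: A, A :&: pos); last by rewrite signed_set_pos_abs.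
    rewrite inE /= pos_abs_sub // card_pos_abs // size_A eqxx andbT.
    apply/subsetP => x /setIP[x_A x_pos].
    by apply/imsetP; exists x; rewrite // /pos_abs x_pos.
  move=> [[B T]]; rewrite inE /= => /and3P[B_pos T_B /eqP <-] ->.
  split; first exact: signed_set_opp_free.
  by rewrite -card_pos_abs ?signed_set_opp_free // pos_abs_signed_set.
apply: card_in_imset => -[B T] [B' T'] /[!inE] /and3P[/= B_pos T_B _].
move=> /and3P[/= B'_pos T'_B' _] /= eq_signed.
congr pair.
  by rewrite -(pos_abs_signed_set B_pos T_B) eq_signed pos_abs_signed_set.
by rewrite -(signed_setIpos B_pos T_B) eq_signed signed_setIpos.
Qed.

Lemma card_opp_free_odd h :
  #|[set f : {ffun 'I_h -> F} | opp_free f]|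
    = (\sum_(s < #|F|.+1) 2 ^ s * 'C(#|pos|, s) * nsurj h s)%N.
Proof.
under eq_bigr do rewrite -card_opp_free_sets.
rewrite -sum_by_card -sum1_card.
rewrite (partition_big (fun f : {ffun 'I_h -> F} => [set f i | i : 'I_h])
                       opp_free_set) => [|f].
  apply: eq_bigr => A A_free; rewrite -card_ffuns_onto -sum1_card.
  by apply: eq_bigl => f; rewrite !inE opp_free_imset andb_idl // => /eqP ->.
by rewrite inE opp_free_imset.
Qed.

End OddCharacteristic.

Lemma Gamma_coef_odd n s :
  (\prod_(i < s) (((n.*2).+1)%:Q - (2 * i + 1)%:R)) / (s`!)%:R
    = (2 ^ s * 'C(n, s))%:R.
Proof.
have -> : \prod_(i < s) (((n.*2).+1)%:Q - (2 * i + 1)%:R) = (2 ^ s * n ^_ s)%:R.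
  rewrite natrM natr_ffact natrX -[s in _ ^+ s]card_ord -prodr_const -big_split /=.
  by apply: eq_bigr => i _; rewrite -pmulrn -addn1 -muln2 !natrD !natrM; ring.
by rewrite -bin_ffact mulnA natrM mulfK // pnatr_eq0 -lt0n fact_gt0.
Qed.

Lemma Gamma_odd n h : (0 < h)%N ->
  Gamma h (n.*2).+1 = (\sum_(s < (n.*2).+2) 2 ^ s * 'C(n, s) * nsurj h s)%N%:R.
Proof.
move=> h_gt0; rewrite /Gamma subn1 /= divn2 doubleK natr_sum.
pose term s := (2 ^ s * 'C(n, s) * nsurj h s)%N%:R : rat.
rewrite (eq_bigr term) => [|s _]; last by rewrite /term natrM -Gamma_coef_odd -pmulrn.
rewrite -[RHS]/(\sum_(s < (n.*2).+2) term s).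
have term0 : term 0%N = 0 by rewrite /term nsurj0 // muln0.
rewrite -(big_mkord xpredT term) [RHS]big_ltn // term0 add0r.
rewrite [RHS](big_cat_nat _ (n := (minn h n).+1)) //=; last by rewrite ltnS; lia.
rewrite [X in _ = _ + X]big_nat_cond [X in _ = _ + X]big1 ?addr0 // => s.
rewrite andbT => /andP[lt_min _]; rewrite /term.
have [le_sh | lt_hs] := leqP s h; last by rewrite nsurj_small // muln0.
by rewrite bin_small ?muln0 ?mul0n //; move: lt_min; lia.
Qed.

Theorem proposition4p1 (F : finFieldType) (p m h k : nat)
  (hp : prime p) (hq : #|F| = (p ^ m)%N) (h3 : (3 <= h)%N) (hk : (h <= k)%N) :
  let q := #|F| in
  (#|D3 F k h|)%:Q =
    if p == 2%N then
      (if (h <= q.+1)%N then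
         (q%:Q) ^+ (k - h) * ((q%:Q) ^+ h - \prod_(i < h) (q%:Q - (i.+1)%:R)) - 1
       else (q%:Q) ^+ k - 1)
    else (q%:Q) ^+ (k - h) * ((q%:Q) ^+ h - Gamma h q) - 1.
Proof.
rewrite /= -!pmulrn.
have h_gt0 : (0 < h)%N by apply: leq_trans h3.
have charF := card_finPcharP hq hp.
set N := #|[set f : {ffun 'I_h -> F} | opp_free f]|.
have -> : #|D3 F k h|%:R = #|F|%:R ^+ k - 1 - N%:R * #|F|%:R ^+ (k - h) :> rat.
  by rewrite -[_ ^+ k]natrX -(card_D3 F h_gt0 hk) !natrD natrM natrX; ring.
have -> : #|F|%:R ^+ k = #|F|%:R ^+ (k - h) * #|F|%:R ^+ h :> rat.
  by rewrite -exprD subnK.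
case: eqP => [p2 | p_neq2].
  subst p; rewrite /N card_opp_free_pchar2 //; case: leqP => [_ | lt_qh].
    by rewrite natr_pred_ffact; [ring | apply/card_gt0P; exists 0].
  rewrite ffact_small ?mul0r ?subr0 //.
  exact: leq_ltn_trans (leq_pred _) (ltnW lt_qh).
have two_neq0 : (2%:R : F) != 0.
  by rewrite -(dvdn_pcharf charF) dvdn_prime2 //; apply/eqP.
rewrite /N (card_opp_free_odd two_neq0) (card_pos two_neq0) (Gamma_odd _ h_gt0).
ring.
Qed.
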